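(* Let $C$ be a free $E$-linear code of length $2n$ and let $G$ be a generator matrix (over $\mathbb{F}_2$) of the binary code $SHull(C_{Res})=C_{Res}\cap (C_{Res})^{\perp_S}$. Then $\kappa G$ is a generator matrix of $SHull(C)$.
   Context: $E=\langle \kappa,\tau \mid 2\kappa=2\tau=0,\ \kappa^2=\kappa,\ \tau^2=\tau,\ \kappa\tau=\kappa,\ \tau\kappa=\tau\rangle$ is the non-unital ring $\{0,\kappa,\tau,\zeta\}$, $\zeta=\kappa+\tau$, with $e\kappa=e\tau=e$, $e\zeta=0$ for all $e\in E$. Every $e\in E$ is uniquely $u\kappa+v\zeta$ ($u,v\in\mathbb{F}_2$); $\pi(u\kappa+v\zeta)=u$, applied componentwise. For $v\in\mathbb{F}_2^m$, $e\in E$: $ev=(ev_1,\dots,ev_m)$ with $0\cdot e=0,1\cdot e=e$; for a binary matrix $G$, $\kappa G$ is the matrix obtained by multiplying each entry by $\kappa$ in this sense. An $E$-linear code of length $2n$ is a left $E$-submodule $C\subseteq E^{2n}$; $C_{Res}=\pi(C)$, $C_{Tor}=\{v\in\mathbb{F}_2^{2n}:\zeta v\in C\}$; $C$ is free if $C_{Res}=C_{Tor}$. Symplectic inner product: for $x=(u|v),y=(u'|v')$ (each half of length $n$, over $E$ or $\mathbb{F}_2$), $\langle x,y\rangle_s=\sum_i u_iv'_i+\sum_i v_iu'_i$. For binary $B$, $B^{\perp_S}=\{z:\langle z,w\rangle_s=0\ \forall w\in B\}$. For $E$-linear $C$: $C^{\perp_{S_L}}=\{z\in E^{2n}:\langle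 z,w\rangle_s=0\ \forall w\in C\}$, $C^{\perp_{S_R}}=\{z\in E^{2n}:\langle w,z\rangle_s=0\ \forall w\in C\}$, $C^{\perp_S}=C^{\perp_{S_L}}\cap C^{\perp_{S_R}}$, $SHull(C)=C\cap C^{\perp_S}$. For $X=\{x_1,\dots,x_k\}\subseteq E^{2n}$, $\langle X\rangle_E=\{\sum e_jx_j: e_j\in E\}$ and $\langle X\rangle_{\mathbb{F}_2}=\{\sum u_jx_j:u_j\in\mathbb{F}_2\}$; $X$ generates $C$ if $C=\langle X\rangle_E\cup\langle X\rangle_{\mathbb{F}_2}$, and a matrix whose rows form a generating set of $C$ is a generator matrix of $C$. *)

From HB Require Import structures.
From mathcomp Require Import all_boot all_algebra.
Set Implicit Arguments. Unset Strict Implicit. Unset Printing Implicit Defensive.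

(* The non-unital ring E = {0, kappa, tau, zeta}, zeta = kappa + tau. *)
Inductive E := E0 | Ek | Et | Ez.

Definition E2p (e : E) : bool * bool :=
  match e with E0 => (false, false) | Ek => (true, false)
             | Ez => (false, true) | Et => (true, true) end.
Definition p2E (p : bool * bool) : E :=
  match p with (false, false) => E0 | (true, false) => Ek
             | (false, true) => Ez | (true, true) => Et end.
Lemma E2pK : cancel E2p p2E. Proof. by case. Qed.
HB.instance Definition _ := Finite.copy E (can_type E2pK).

Definition eadd (a b : E) : E :=
  match a, b with
  | E0, x | x, E0 => x
  | Ek, Ek | Et, Et | Ez, Ez => E0
  | Ek, Et | Et, Ek => Ez
  | Ek, Ez | Ez, Ek => Et
  | Et, Ez | Ez, Et => Ek
  end.
Definition emul (a b : E) : E :=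
  match b with E0 | Ez => E0 | Ek | Et => a end.
(* pi (u kappa + v zeta) = u *)
Definition epi (e : E) : bool :=
  match e with E0 | Ez => false | Ek | Et => true end.
Definition bscale (b : bool) (e : E) : E := if b then e else E0.

(* vectors of length 2n; first half indexed by lshift, second by rshift *)
Notation vecE n := {ffun 'I_(n + n) -> E}.
Notation vecB n := {ffun 'I_(n + n) -> bool}.

Section Codes.
Variable n : nat.

Definition vzeroE : vecE n := [ffun => E0].
Definition vaddE (x y : vecE n) : vecE n := [ffun i => eadd (x i) (y i)].
Definition vmulE (e : E) (x : vecE n) : vecE n := [ffun i => emul e (x i)].

Definition E_linear (C : {set vecE n}) : Prop :=
  [/\ vzeroE \in C,
      (forall x y, x \in C -> y \in C -> vaddE x y \in C) &
      (forall e x, x \in C -> vmulE e x \in C)].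

Definition vpi (x : vecE n) : vecB n := [ffun i => epi (x i)].
Definition bvscale (e : E) (v : vecB n) : vecE n := [ffun i => bscale (v i) e].

Definition CRes (C : {set vecE n}) : {set vecB n} := [set vpi x | x in C].
Definition CTor (C : {set vecE n}) : {set vecB n} := [set v | bvscale Ez v \in C].
Definition free_code (C : {set vecE n}) : Prop := CRes C = CTor C.

Definition sympB (x y : vecB n) : bool :=
  (\big[addb/false]_(i < n) (x (lshift n i) && y (rshift n i)))
  (+) (\big[addb/false]_(i < n) (x (rshift n i) && y (lshift n i))).
Definition sympE (x y : vecE n) : E :=
  eadd (\big[eadd/E0]_(i < n) emul (x (lshift n i)) (y (rshift n i)))
       (\big[eadd/E0]_(i < n) emul (x (rshift n i)) (y (lshift n i))).

Definition perpSB (B : {set vecB n}) : {set vecB n} :=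
  [set z | [forall w in B, ~~ sympB z w]].
Definition SHullB (B : {set vecB n}) : {set vecB n} := B :&: perpSB B.

Definition perpSL (C : {set vecE n}) : {set vecE n} :=
  [set z | [forall w in C, sympE z w == E0]].
Definition perpSR (C : {set vecE n}) : {set vecE n} :=
  [set z | [forall w in C, sympE w z == E0]].
Definition perpS (C : {set vecE n}) : {set vecE n} := perpSL C :&: perpSR C.
Definition SHull (C : {set vecE n}) : {set vecE n} := C :&: perpS C.

Definition spanE k (M : 'M[E]_(k, n + n)) : {set vecE n} :=
  [set [ffun i => \big[eadd/E0]_(j < k) emul (c j) (M j i)] | c : {ffun 'I_k -> E}].
Definition spanF2E k (M : 'M[E]_(k, n + n)) : {set vecE n} :=
  [set [ffun i => \big[eadd/E0]_(j < k) bscale (u j) (M j i)] | u : {ffun 'I_k -> bool}].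
Definition spanB k (G : 'M[bool]_(k, n + n)) : {set vecB n} :=
  [set [ffun i => \big[addb/false]_(j < k) (u j && G j i)] | u : {ffun 'I_k -> bool}].

Definition genmatB k (G : 'M[bool]_(k, n + n)) (B : {set vecB n}) : Prop :=
  B = spanB G.
Definition genmatE k (M : 'M[E]_(k, n + n)) (C : {set vecE n}) : Prop :=
  C = spanE M :|: spanF2E M.

Definition kappaM k (G : 'M[bool]_(k, n + n)) : 'M[E]_(k, n + n) :=
  \matrix_(j, i) bscale (G j i) Ek.

End Codes.

From mathcomp Require Import all_boot all_algebra.

Set Implicit Arguments.
Unset Strict Implicit.
Unset Printing Implicit Defensive.

(* Writing e = u kappa + v zeta identifies E with F_2 x F_2 through the two
   coordinates pi and zeta; multiplication reads (u, v) (u', v') = (u u', v u').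
   So the zeta-coordinate of <x, y>_s is <zeta x, pi y>_s, and for a free code C
   both coordinates of a codeword range over C_Res. Hence z lies in SHull(C) iff
   pi z and zeta z lie in SHull(C_Res), and z is a combination of the rows of
   kappa G iff pi z and zeta z are binary combinations of the rows of G. *)

Definition ezeta (e : E) : bool := match e with Ez | Et => true | _ => false end.

Lemma E2p_coord e : E2p e = (epi e, ezeta e). Proof. by case: e. Qed.

Lemma E_coord_inj a b : epi a = epi b -> ezeta a = ezeta b -> a = b.
Proof. by move=> ea za; apply: (can_inj E2pK); rewrite !E2p_coord ea za. Qed.

Lemma eqE0 e : (e == E0) = ~~ epi e && ~~ ezeta e. Proof. by case: e. Qed.

Lemma epi_p2E u v : epi (p2E (u, v)) = u. Proof. by case: u; case: v. Qed.
Lemma ezeta_p2E u v : ezeta (p2E (u, v)) = v. Proof. by case: u; case: v. Qed.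

Lemma epi_add a b : epi (eadd a b) = epi a (+) epi b. Proof. by case: a; case: b. Qed.
Lemma ezeta_add a b : ezeta (eadd a b) = ezeta a (+) ezeta b.
Proof. by case: a; case: b. Qed.

Lemma epi_mul a b : epi (emul a b) = epi a && epi b. Proof. by case: a; case: b. Qed.
Lemma ezeta_mul a b : ezeta (emul a b) = ezeta a && epi b.
Proof. by case: a; case: b. Qed.

Lemma epi_bscale u e : epi (bscale u e) = u && epi e. Proof. by case: u. Qed.
Lemma ezeta_bscale u e : ezeta (bscale u e) = u && ezeta e. Proof. by case: u. Qed.

Lemma emul_kappa_bscale c u : emul c (bscale u Ek) = bscale u c. Proof. by case: u. Qed.

Lemma epi_sum I (r : seq I) (F : I -> E) :
  epi (\big[eadd/E0]_(i <- r) F i) = \big[addb/false]_(i <- r) epi (F i).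
Proof. by apply: (big_morph epi epi_add). Qed.

Lemma ezeta_sum I (r : seq I) (F : I -> E) :
  ezeta (\big[eadd/E0]_(i <- r) F i) = \big[addb/false]_(i <- r) ezeta (F i).
Proof. by apply: (big_morph ezeta ezeta_add). Qed.

Section Vectors.
Variable n : nat.
Implicit Types (x y z : vecE n) (v : vecB n).

Definition vzeta x : vecB n := [ffun i => ezeta (x i)].

Lemma vecE_coord_inj x y : vpi x = vpi y -> vzeta x = vzeta y -> x = y.
Proof.
move=> /ffunP ex /ffunP zx; apply/ffunP => i.
by apply: E_coord_inj; [move: (ex i) | move: (zx i)]; rewrite !ffunE.
Qed.

Lemma vmulE_kappa x : vmulE Ek x = bvscale Ek (vpi x).
Proof. by apply/ffunP => i; rewrite !ffunE; case: (x i). Qed.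

Lemma vaddE_kappa_vpi x : vaddE x (bvscale Ek (vpi x)) = bvscale Ez (vzeta x).
Proof. by apply/ffunP => i; rewrite !ffunE; case: (x i). Qed.

Lemma vecE_decomp x : vaddE (bvscale Ek (vpi x)) (bvscale Ez (vzeta x)) = x.
Proof. by apply/ffunP => i; rewrite !ffunE; case: (x i). Qed.

Lemma sympBC v w : sympB v w = sympB w v.
Proof. by rewrite /sympB addbC; congr addb; apply: eq_bigr => i _; apply: andbC. Qed.

Lemma epi_sympE x y : epi (sympE x y) = sympB (vpi x) (vpi y).
Proof.
by rewrite epi_add !epi_sum; congr addb; apply: eq_bigr => i _; rewrite epi_mul !ffunE.
Qed.

Lemma ezeta_sympE x y : ezeta (sympE x y) = sympB (vzeta x) (vpi y).
Proof.
by rewrite ezeta_add !ezeta_sum; congr addb; apply: eq_bigr => i _;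
  rewrite ezeta_mul !ffunE.
Qed.

Lemma sympE_eq0 x y :
  (sympE x y == E0) = ~~ sympB (vpi x) (vpi y) && ~~ sympB (vzeta x) (vpi y).
Proof. by rewrite eqE0 epi_sympE ezeta_sympE. Qed.

Lemma perpSB_orth (B : {set vecB n}) v w : v \in perpSB B -> w \in B -> ~~ sympB v w.
Proof. by rewrite inE => /forallP /(_ w) /implyP. Qed.

Lemma perpSB_CResP (C : {set vecE n}) v :
  reflect (forall w, w \in C -> ~~ sympB v (vpi w)) (v \in perpSB (CRes C)).
Proof.
apply: (iffP idP) => [v_perp w wC | v_orth]; first exact: perpSB_orth (imset_f _ wC).
by rewrite inE; apply/forallP => u; apply/implyP => /imsetP [w wC ->]; apply: v_orth.
Qed.

Section FreeCode.
Variable C : {set vecE n}.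
Hypotheses (C_lin : E_linear C) (C_free : free_code C).

Lemma vzeta_CRes x : x \in C -> vzeta x \in CRes C.
Proof.
move=> xC; have [_ addC mulC] := C_lin.
by rewrite C_free inE -vaddE_kappa_vpi -vmulE_kappa; apply/addC/mulC.
Qed.

Lemma mem_free_code x : (x \in C) = (vpi x \in CRes C) && (vzeta x \in CRes C).
Proof.
have [_ addC mulC] := C_lin.
apply/idP/andP => [xC | [/imsetP [y yC pi_xy]]]; first by rewrite imset_f ?vzeta_CRes.
rewrite C_free inE => zeta_xC.
by rewrite -[x]vecE_decomp pi_xy -vmulE_kappa; apply/addC/zeta_xC/mulC.
Qed.

(* For the right orthogonality, sympE w z = 0 only needs pi z to be orthogonal
   to both coordinates of w, which lie in C_Res. *)
Lemma mem_perpS z :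
  (z \in perpS C) = (vpi z \in perpSB (CRes C)) && (vzeta z \in perpSB (CRes C)).
Proof.
rewrite inE [z \in perpSL C]inE [z \in perpSR C]inE.
apply/andP/andP => [[/forallP orthL _] | [pi_perp zeta_perp]].
  by split; apply/perpSB_CResP => w wC; move: (implyP (orthL w) wC);
    rewrite sympE_eq0 => /andP [].
have /perpSB_CResP pi_orth := pi_perp; have /perpSB_CResP zeta_orth := zeta_perp.
split; apply/forallP => w; apply/implyP => wC; rewrite sympE_eq0.
  by rewrite pi_orth ?zeta_orth.
by rewrite sympBC pi_orth // sympBC (perpSB_orth pi_perp) ?vzeta_CRes.
Qed.

Lemma mem_SHull z :
  (z \in SHull C) = (vpi z \in SHullB (CRes C)) && (vzeta z \in SHullB (CRes C)).
Proof. by rewrite inE mem_free_code mem_perpS !inE andbACA. Qed.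

End FreeCode.

Section KappaSpan.
Variables (k : nat) (G : 'M[bool]_(k, n + n)).

Lemma epi_kappaM_comb (c : 'I_k -> E) i :
  epi (\big[eadd/E0]_(j < k) emul (c j) (kappaM G j i))
  = \big[addb/false]_(j < k) (epi (c j) && G j i).
Proof.
by rewrite epi_sum; apply: eq_bigr => j _; rewrite mxE emul_kappa_bscale epi_bscale andbC.
Qed.

Lemma ezeta_kappaM_comb (c : 'I_k -> E) i :
  ezeta (\big[eadd/E0]_(j < k) emul (c j) (kappaM G j i))
  = \big[addb/false]_(j < k) (ezeta (c j) && G j i).
Proof.
by rewrite ezeta_sum; apply: eq_bigr => j _;
  rewrite mxE emul_kappa_bscale ezeta_bscale andbC.
Qed.

(* E has no identity; binary coefficients u are realised as u kappa because the
   entries of kappa G lie in {0, kappa}. *)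
Lemma spanF2E_kappaM_sub : spanF2E (kappaM G) \subset spanE (kappaM G).
Proof.
apply/subsetP => _ /imsetP [u _ ->]; apply/imsetP.
exists [ffun j => bscale (u j) Ek] => //; apply/ffunP => i; rewrite !ffunE.
by apply: eq_bigr => j _; rewrite mxE emul_kappa_bscale ffunE; case: (u j); case: (G j i).
Qed.

Lemma mem_spanE_kappaM x :
  (x \in spanE (kappaM G)) = (vpi x \in spanB G) && (vzeta x \in spanB G).
Proof.
rewrite /spanE /spanB; apply/imsetP/andP.
  move=> [c _ ->]; split; apply/imsetP;
    [exists [ffun j => epi (c j)] | exists [ffun j => ezeta (c j)]] => //;
    apply/ffunP => i; rewrite !ffunE ?epi_kappaM_comb ?ezeta_kappaM_comb;
    by apply: eq_bigr => j _; rewrite ffunE.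
move=> [/imsetP [u _ pi_x] /imsetP [v _ zeta_x]].
exists [ffun j => p2E (u j, v j)] => //.
apply: vecE_coord_inj; [rewrite pi_x | rewrite zeta_x];
  apply/ffunP => i; rewrite !ffunE ?epi_kappaM_comb ?ezeta_kappaM_comb;
  by apply: eq_bigr => j _; rewrite ffunE ?epi_p2E ?ezeta_p2E.
Qed.

End KappaSpan.
End Vectors.

Theorem mainTheorem2 (n : nat) (C : {set vecE n}) (k : nat) (G : 'M[bool]_(k, n + n)) :
  E_linear C -> free_code C ->
  genmatB G (SHullB (CRes C)) ->
  genmatE (kappaM G) (SHull C).
Proof.
move=> C_lin C_free G_gen; rewrite /genmatE (setUidPl (spanF2E_kappaM_sub G)).
by apply/setP => x; rewrite mem_SHull // mem_spanE_kappaM -G_gen.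
Qed.
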